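(* For all integers $2\le k\le n$, $$\frac12+\frac{1}{4n}\le q_t(G_k,G_n)\le \frac12+\frac{1}{2n}.$$ In particular, for every $k\ge 2$, $\lim_{n\to\infty} q_t(G_k,G_n)=\frac12$.
   Context: For $m\ge 1$, $G_m$ is the graph with vertex set $\{a_1,\ldots,a_m\}\cup\{b_1,\ldots,b_m\}\cup\{c_1,\ldots,c_m\}$ in which $\{a_1,\ldots,a_m\}$ forms a clique, each $b_i$ is adjacent to $a_i$ and to $c_i$, and there are no other edges. $\gamma_t$ denotes the total domination number (minimum size of a set $S$ of vertices such that every vertex of the graph has a neighbor in $S$). $G\Box H$ is the Cartesian product: vertex set $V(G)\times V(H)$, with $(u_1,v_1)\sim(u_2,v_2)$ iff either $u_1=u_2$ and $v_1v_2\in E(H)$, or $v_1=v_2$ and $u_1u_2\in E(G)$. For graphs $G,H$ without isolated vertices, the total domination quotient is $q_t(G,H)=\dfrac{\gamma_t(G\Box H)}{\gamma_t(G)\gamma_t(H)}$. *)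

From mathcomp Require Import all_boot all_order all_algebra.
Set Implicit Arguments. Unset Strict Implicit. Unset Printing Implicit Defensive.
Import Order.TTheory GRing.Theory Num.Theory.

Definition total_dominating (T : finType) (e : rel T) (S : {set T}) : bool :=
  [forall v : T, [exists u in S, e v u]].

(* Total domination number: minimum size of a total dominating set.
   (Default #|T| is irrelevant for graphs without isolated vertices.) *)
Definition gamma_t (T : finType) (e : rel T) : nat :=
  \big[minn/#|T|]_(S : {set T} | total_dominating e S) #|S|.

Definition cart_prod (T1 T2 : finType) (e1 : rel T1) (e2 : rel T2) : rel (T1 * T2) :=
  fun x y => ((x.1 == y.1) && e2 x.2 y.2) || ((x.2 == y.2) && e1 x.1 y.1).

(* The graph G_m: vertex (0,i) = a_i, (1,i) = b_i, (2,i) = c_i. *)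
Definition Gm_vert (m : nat) : finType := ('I_3 * 'I_m)%type.

Definition Gm_edge (m : nat) : rel (Gm_vert m) :=
  fun x y =>
    let: (s, i) := x in let: (t, j) := y in
    [|| (s == 0 :> nat) && (t == 0 :> nat) && (i != j),
        (i == j) && ((s == 0 :> nat) && (t == 1 :> nat) || (s == 1 :> nat) && (t == 0 :> nat))
      | (i == j) && ((s == 1 :> nat) && (t == 2 :> nat) || (s == 2 :> nat) && (t == 1 :> nat))].

Definition qt (T1 T2 : finType) (e1 : rel T1) (e2 : rel T2) : rat :=
  ((gamma_t (cart_prod e1 e2))%:R / ((gamma_t e1 * gamma_t e2)%:R))%R.

Definition qtG (k n : nat) : rat := qt (@Gm_edge k) (@Gm_edge n).

From mathcomp Require Import all_boot all_order all_algebra.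
From mathcomp Require Import zify ring lra.
Set Implicit Arguments. Unset Strict Implicit. Unset Printing Implicit Defensive.
Import Order.TTheory GRing.Theory Num.Theory.

(* In G_m each c_i is dominated only by b_i, and b_i only by a_i or c_i, so
   gamma_t(G_m) = 2m.  In G_k □ G_n group the vertices into the k·n blocks
   {a_i, b_i, c_i} × {a_j, b_j, c_j}.  Dominating (c_i,c_j), (b_i,c_j) and
   (c_i,b_j) puts at least two vertices of S into every block, and a block with
   exactly two avoids its a-row and a-column.  If a whole row i of blocks is
   tight (two vertices in each block), dominating (c_i,a_j) and (b_i,a_j) forces (c_i,b_j), (b_i,b_j) into S,
   so (a_i,c_j) must be dominated by some (a_i',c_j): every column then holds a
   block with three vertices.  Otherwise every row does.  Either way
   |S| >= 2kn + min(k,n) = 2kn + k, while an explicit set of size 2kn + 2k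
   dominates; dividing by (2k)(2n) gives both bounds, and hence the limit. *)

Section TotalDomination.
Variables (T : finType) (e : rel T).

Lemma total_dominatingP (S : {set T}) :
  reflect (forall v, exists2 u, u \in S & e v u) (total_dominating e S).
Proof.
apply: (iffP forallP) => [tdS v | tdS v].
  by have /existsP[u /andP[Su evu]] := tdS v; exists u.
by have [u Su evu] := tdS v; apply/existsP; exists u; rewrite Su.
Qed.

Lemma gamma_t_le (S : {set T}) : total_dominating e S -> gamma_t e <= #|S|.
Proof.
move=> tdS; rewrite /gamma_t -minEnat.
by have := bigmin_le_cond #|T| (fun S : {set T} => #|S|) tdS.
Qed.

Lemma gamma_t_ge m :
  m <= #|T| -> (forall S : {set T}, total_dominating e S -> m <= #|S|) ->
  m <= gamma_t e.
Proof. by move=> mT mS; rewrite /gamma_t -minEnat; apply: (le_bigmin (T := nat)). Qed.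

End TotalDomination.

Lemma total_dominating_cart_prod (T1 T2 : finType) (e1 : rel T1) (e2 : rel T2)
    (S : {set T1 * T2}) x y :
  total_dominating (cart_prod e1 e2) S ->
  (exists2 x', e1 x x' & (x', y) \in S) \/ (exists2 y', e2 y y' & (x, y') \in S).
Proof.
move=> /total_dominatingP/(_ (x, y))[[x' y'] Su].
rewrite /cart_prod /= => /orP[/andP[/eqP-> e2y] | /andP[/eqP-> e1x]].
  by right; exists y'.
by left; exists x'.
Qed.

Lemma card_set_prod (T1 T2 : finType) (S : {set T1 * T2}) :
  #|S| = \sum_x \sum_y ((x, y) \in S : nat).
Proof.
rewrite -sum1_card big_mkcond pair_big /=.
by apply: eq_bigr => -[x y] _; case: (_ \in S).
Qed.

Lemma sum_gt_const m (F : 'I_m -> nat) c i0 :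
  (forall i, c <= F i) -> c < F i0 -> c * m < \sum_i F i.
Proof.
move=> Fc Fi0; rewrite (bigD1 i0) //=.
have m_gt0 : 0 < m by apply: leq_ltn_trans (ltn_ord i0).
have rest : \sum_(i | i != i0) c <= \sum_(i | i != i0) F i by apply: leq_sum.
rewrite sum_nat_const cardC1 card_ord mulnC in rest.
by rewrite -[in c * m](prednK m_gt0) mulnS -addSn leq_add.
Qed.

Notation A3 := (@Ordinal 3 0 isT).
Notation B3 := (@Ordinal 3 1 isT).
Notation C3 := (@Ordinal 3 2 isT).

Lemma ord3P (s : 'I_3) : [\/ s = A3, s = B3 | s = C3].
Proof.
by case: s => -[|[|[|//]]] ?; [apply: Or31 | apply: Or32 | apply: Or33]; apply: val_inj.
Qed.

Lemma sum_ord3 (F : 'I_3 -> nat) : \sum_(s < 3) F s = F A3 + F B3 + F C3.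
Proof.
by rewrite !big_ord_recl big_ord0 addn0 addnA; congr (F _ + F _ + F _); apply: val_inj.
Qed.

Lemma sum_Gm_vert m (F : Gm_vert m -> nat) :
  \sum_x F x = \sum_(i < m) \sum_(s < 3) F (s, i).
Proof. by rewrite exchange_big pair_big; apply: eq_bigr => -[]. Qed.

Section GmNeighbours.
Variables (m : nat) (i : 'I_m) (y : Gm_vert m).

Lemma Gm_edge_c : Gm_edge (C3, i) y = (y == (B3, i)).
Proof.
case: y => s j; rewrite xpair_eqE eq_sym.
by case: (ord3P s) => ->; rewrite /= ?andbF ?andbT.
Qed.

Lemma Gm_edge_b : Gm_edge (B3, i) y = (y == (A3, i)) || (y == (C3, i)).
Proof.
case: y => s j; rewrite !xpair_eqE [j == i]eq_sym.
by case: (ord3P s) => ->; rewrite /= ?andbF ?andbT ?orbF.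
Qed.

Lemma Gm_edge_a : Gm_edge (A3, i) y = (y == (B3, i)) || (y.1 == A3) && (y.2 != i).
Proof.
case: y => s j; rewrite !xpair_eqE [j == i]eq_sym.
by case: (ord3P s) => ->; rewrite /= ?andbF ?andbT ?orbF.
Qed.

End GmNeighbours.

Lemma card_Gm_set m (S : {set Gm_vert m}) :
  #|S| = \sum_(i < m) \sum_(s < 3) ((s, i) \in S : nat).
Proof. by rewrite -sum1_card big_mkcond sum_Gm_vert. Qed.

Lemma Gm_dom_c m (S : {set Gm_vert m}) i :
  total_dominating (@Gm_edge m) S -> (B3, i) \in S.
Proof. by move=> /total_dominatingP/(_ (C3, i))[u Su]; rewrite Gm_edge_c => /eqP <-. Qed.

Lemma Gm_dom_b m (S : {set Gm_vert m}) i :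
  total_dominating (@Gm_edge m) S -> ((A3, i) \in S) || ((C3, i) \in S).
Proof.
move=> /total_dominatingP/(_ (B3, i))[u Su].
by rewrite Gm_edge_b => /orP[]/eqP Eu; rewrite -Eu Su ?orbT.
Qed.

Lemma gamma_t_Gm m : 0 < m -> gamma_t (@Gm_edge m) = 2 * m.
Proof.
move=> m_gt0; apply/eqP; rewrite eqn_leq; apply/andP; split.
  have tdAB : total_dominating (@Gm_edge m) [set x | x.1 != C3].
    apply/total_dominatingP => -[s i].
    by case: (ord3P s) => ->; [exists (B3, i) | exists (A3, i) | exists (B3, i)];
      rewrite ?inE /= ?eqxx.
  apply: leq_trans (gamma_t_le tdAB) _.
  rewrite card_Gm_set (eq_bigr (fun=> 2)) => [|i _]; last by rewrite sum_ord3 !inE.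
  by rewrite sum_nat_const card_ord mulnC.
apply: gamma_t_ge => [|S tdS]; first by rewrite card_prod !card_ord leq_mul2r orbT.
have -> : 2 * m = \sum_(i < m) 2 by rewrite sum_nat_const card_ord mulnC.
rewrite card_Gm_set.
apply: leq_sum => i _; rewrite sum_ord3 (Gm_dom_c i tdS).
by case/orP: (Gm_dom_b i tdS) => ->; rewrite ?addn1 ?add1n ?addnS ?addSn.
Qed.

Definition block_card k n (S : {set Gm_vert k * Gm_vert n}) i j :=
  \sum_(s < 3) \sum_(t < 3) (((s, i), (t, j)) \in S : nat).

Lemma card_Gm_prod_set k n (S : {set Gm_vert k * Gm_vert n}) :
  #|S| = \sum_(i < k) \sum_(j < n) block_card S i j.
Proof.
rewrite card_set_prod sum_Gm_vert.
under eq_bigr => i _ do under eq_bigr => s _ do rewrite sum_Gm_vert.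
by apply: eq_bigr => i _; rewrite exchange_big.
Qed.

Section ProductDomination.
Variables (k n : nat) (S : {set Gm_vert k * Gm_vert n}).
Hypothesis tdS : total_dominating (cart_prod (@Gm_edge k) (@Gm_edge n)) S.

Lemma dom_cc i j : (((B3, i), (C3, j)) \in S) || (((C3, i), (B3, j)) \in S).
Proof.
case: (total_dominating_cart_prod (C3, i) (C3, j) tdS) => -[u + Su];
  by rewrite Gm_edge_c => /eqP Eu; rewrite -Eu Su ?orbT.
Qed.

Lemma dom_bc i j :
  [|| ((A3, i), (C3, j)) \in S, ((C3, i), (C3, j)) \in S | ((B3, i), (B3, j)) \in S].
Proof.
case: (total_dominating_cart_prod (B3, i) (C3, j) tdS) => -[u + Su];
  [rewrite Gm_edge_b => /orP[]/eqP Eu | rewrite Gm_edge_c => /eqP Eu];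
  by rewrite -Eu Su ?orbT.
Qed.

Lemma dom_cb i j :
  [|| ((B3, i), (B3, j)) \in S, ((C3, i), (A3, j)) \in S | ((C3, i), (C3, j)) \in S].
Proof.
case: (total_dominating_cart_prod (C3, i) (B3, j) tdS) => -[u + Su];
  [rewrite Gm_edge_c => /eqP Eu | rewrite Gm_edge_b => /orP[]/eqP Eu];
  by rewrite -Eu Su ?orbT.
Qed.

Lemma dom_ca i j :
  [\/ ((B3, i), (A3, j)) \in S, ((C3, i), (B3, j)) \in S
    | exists2 j', j' != j & ((C3, i), (A3, j')) \in S].
Proof.
case: (total_dominating_cart_prod (C3, i) (A3, j) tdS) => -[u + Su].
  by rewrite Gm_edge_c => /eqP Eu; rewrite Eu in Su; apply: Or31.
case: u Su => t j' /[swap]; rewrite Gm_edge_a => /orP[/eqP[-> ->] | /andP[/= /eqP-> jj']] Su.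
  exact: Or32.
by apply: Or33; exists j'.
Qed.

Lemma dom_ba i j :
  [\/ ((A3, i), (A3, j)) \in S, ((C3, i), (A3, j)) \in S, ((B3, i), (B3, j)) \in S
    | exists2 j', j' != j & ((B3, i), (A3, j')) \in S].
Proof.
case: (total_dominating_cart_prod (B3, i) (A3, j) tdS) => -[u + Su].
  rewrite Gm_edge_b => /orP[]/eqP Eu; rewrite Eu in Su; [exact: Or41 | exact: Or42].
case: u Su => t j' /[swap]; rewrite Gm_edge_a => /orP[/eqP[-> ->] | /andP[/= /eqP-> jj']] Su.
  exact: Or43.
by apply: Or44; exists j'.
Qed.

Lemma dom_ac i j :
  [\/ ((B3, i), (C3, j)) \in S, ((A3, i), (B3, j)) \in S
    | exists2 i', i' != i & ((A3, i'), (C3, j)) \in S].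
Proof.
case: (total_dominating_cart_prod (A3, i) (C3, j) tdS) => -[u + Su]; last first.
  by rewrite Gm_edge_c => /eqP Eu; rewrite Eu in Su; apply: Or32.
case: u Su => s i' /[swap]; rewrite Gm_edge_a => /orP[/eqP[-> ->] | /andP[/= /eqP-> ii']] Su.
  exact: Or31.
by apply: Or33; exists i'.
Qed.

Lemma block_card_ge2 i j : 2 <= block_card S i j.
Proof.
rewrite /block_card !sum_ord3; move: (dom_cc i j) (dom_bc i j) (dom_cb i j).
by do 9 case: (_ \in S).
Qed.

Lemma tight_block_avoids_a i j s t :
  block_card S i j <= 2 -> ((s, i), (t, j)) \in S -> (s != A3) && (t != A3).
Proof.
case: (ord3P s) => ->; case: (ord3P t) => -> //=;
  rewrite /block_card !sum_ord3; move: (dom_cc i j) (dom_bc i j) (dom_cb i j);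
  by do 9 case: (_ \in S).
Qed.

End ProductDomination.

Lemma tight_block_not_bc k n (S : {set Gm_vert k * Gm_vert n}) i j :
  block_card S i j <= 2 -> ((C3, i), (B3, j)) \in S -> ((B3, i), (B3, j)) \in S ->
  ((B3, i), (C3, j)) \notin S.
Proof. by rewrite /block_card !sum_ord3; do 9 case: (_ \in S). Qed.

Lemma tight_row_loose_columns k n (S : {set Gm_vert k * Gm_vert n}) i0 :
  total_dominating (cart_prod (@Gm_edge k) (@Gm_edge n)) S ->
  (forall j, block_card S i0 j <= 2) -> forall j, exists i, 2 < block_card S i j.
Proof.
move=> tdS tight j.
have noA s t j' : ((s, i0), (t, j')) \in S -> (s != A3) && (t != A3).
  exact: tight_block_avoids_a (tight j').
have cb : ((C3, i0), (B3, j)) \in S.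
  by case: (dom_ca tdS i0 j) => // [/noA | [j' _ /noA]].
have bb : ((B3, i0), (B3, j)) \in S.
  by case: (dom_ba tdS i0 j) => // [/noA | /noA | [j' _ /noA]].
have /negPf nbc := tight_block_not_bc (tight j) cb bb.
case: (dom_ac tdS i0 j) => [| /noA // | [i ii0 ai_cj]]; first by rewrite nbc.
exists i; rewrite ltnNge; apply/negP => tight_ij.
by have := tight_block_avoids_a tdS tight_ij ai_cj.
Qed.

Lemma Gm_prod_td_card_ge k n (S : {set Gm_vert k * Gm_vert n}) :
  k <= n -> total_dominating (cart_prod (@Gm_edge k) (@Gm_edge n)) S ->
  2 * k * n + k <= #|S|.
Proof.
move=> kn tdS; rewrite card_Gm_prod_set.
have ge2 := block_card_ge2 tdS.
case: (boolP [exists i, [forall j, block_card S i j <= 2]]) => [|/existsPn loose].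
  case/existsP=> i0 /forallP/(tight_row_loose_columns tdS) loose.
  rewrite exchange_big; apply: leq_trans (_ : \sum_(j < n) (2 * k).+1 <= _).
    by rewrite sum_nat_const card_ord; nia.
  by apply: leq_sum => j _; have [i /(sum_gt_const (ge2^~ j))] := loose j.
apply: leq_trans (_ : \sum_(i < k) (2 * n).+1 <= _).
  by rewrite sum_nat_const card_ord; nia.
apply: leq_sum => i _; have /forallPn[j] := loose i; rewrite -ltnNge.
exact: sum_gt_const.
Qed.

(* (a_i, a_0) dominates every (a_i, a_j) with j != 0, and column 1 carries
   (c_i, a_1), which dominates every (c_i, a_j) with j != 1. *)
Definition upper_set k n : {set Gm_vert k * Gm_vert n} :=
  [set x | let: ((s, _), (t, j)) := x in
    if val j == 1
    then [|| (s == C3) && (t == A3), (s == C3) && (t == B3) | (s == A3) && (t == C3)]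
    else (s == B3) && (t != A3) || [&& val j == 0, s == A3 & t == A3]].

Lemma block_card_upper_set k n i (j : 'I_n) :
  block_card (upper_set k n) i j = 2 + (val j == 0) + (val j == 1).
Proof. by rewrite /block_card !sum_ord3 !inE /=; case: j => -[|[|j]]. Qed.

Lemma card_upper_set k n : 1 < n -> #|upper_set k n| = 2 * k * n + 2 * k.
Proof.
case: n => [|[|n]] // _; rewrite card_Gm_prod_set.
under eq_bigr => i _ do under eq_bigr => j _ do rewrite block_card_upper_set.
under eq_bigr => i _ do rewrite !big_ord_recl /= sum_nat_const card_ord.
rewrite sum_nat_const card_ord; nia.
Qed.

Lemma total_dominating_upper_set k n : 1 < k -> 1 < n ->
  total_dominating (cart_prod (@Gm_edge k) (@Gm_edge n)) (upper_set k n).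
Proof.
move=> k_gt1 n_gt1; pose j0 : 'I_n := Ordinal (ltnW n_gt1); pose j1 : 'I_n := Ordinal n_gt1.
apply/total_dominatingP => -[[s i] [t j]].
have [i' ii'] : exists i', i != i'.
  have /card_gt0P[i' /[!inE] i'i] : 0 < #|predC1 i| by rewrite cardC1 card_ord; lia.
  by exists i'; rewrite eq_sym.
rewrite /cart_prod; case: (eqVneq j j1) => [-> | jj1].
  case: (ord3P s) => ->; case: (ord3P t) => ->.
  - by exists ((A3, i), (A3, j0)); rewrite ?inE /= ?eqxx.
  - by exists ((A3, i), (C3, j1)); rewrite ?inE /= ?eqxx.
  - by exists ((A3, i'), (C3, j1)); rewrite ?inE /= ?eqxx ?ii' ?orbT.
  - by exists ((C3, i), (A3, j1)); rewrite ?inE /= ?eqxx.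
  - by exists ((C3, i), (B3, j1)); rewrite ?inE /= ?eqxx.
  - by exists ((A3, i), (C3, j1)); rewrite ?inE /= ?eqxx.
  - by exists ((C3, i), (B3, j1)); rewrite ?inE /= ?eqxx.
  - by exists ((C3, i), (A3, j1)); rewrite ?inE /= ?eqxx.
  - by exists ((C3, i), (B3, j1)); rewrite ?inE /= ?eqxx.
have jn1 : (val j == 1) = false by apply/negbTE.
case: (ord3P s) => ->; case: (ord3P t) => ->.
- case: (eqVneq j j0) => [-> | jj0].
    by exists ((A3, i'), (A3, j0)); rewrite ?inE /= ?eqxx ?ii' ?orbT.
  by exists ((A3, i), (A3, j0)); rewrite ?inE /= ?eqxx ?jj0.
- by exists ((B3, i), (B3, j)); rewrite ?inE /= ?eqxx ?jn1.
- by exists ((B3, i), (C3, j)); rewrite ?inE /= ?eqxx ?jn1.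
- by exists ((B3, i), (B3, j)); rewrite ?inE /= ?eqxx ?jn1.
- by exists ((B3, i), (C3, j)); rewrite ?inE /= ?eqxx ?jn1.
- by exists ((B3, i), (B3, j)); rewrite ?inE /= ?eqxx ?jn1.
- by exists ((C3, i), (A3, j1)); rewrite ?inE /= ?eqxx ?jn1 ?jj1.
- by exists ((B3, i), (B3, j)); rewrite ?inE /= ?eqxx ?jn1.
- by exists ((B3, i), (C3, j)); rewrite ?inE /= ?eqxx ?jn1.
Qed.

Lemma gamma_t_Gm_prod k n : 1 < k -> k <= n ->
  2 * k * n + k <= gamma_t (cart_prod (@Gm_edge k) (@Gm_edge n)) <= 2 * k * n + 2 * k.
Proof.
move=> k_gt1 kn; have n_gt1 := leq_trans k_gt1 kn.
rewrite -(card_upper_set k n_gt1) gamma_t_le ?total_dominating_upper_set // andbT.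
apply: gamma_t_ge => [|S]; last exact: Gm_prod_td_card_ge.
by rewrite !card_prod !card_ord; nia.
Qed.

Local Open Scope ring_scope.

Lemma ratio_bounds (R : realFieldType) (k n g : nat) : (0 < k)%N -> (0 < n)%N ->
  (2 * k * n + k <= g <= 2 * k * n + 2 * k)%N ->
  1/2 + 1/(4 * n)%:R <= (g%:R / (2 * k * (2 * n))%:R : R) <= 1/2 + 1/(2 * n)%:R.
Proof.
move=> k_gt0 n_gt0 /andP[g_ge g_le].
have kR : 0 < k%:R :> R by rewrite ltr0n.
have nR : 0 < n%:R :> R by rewrite ltr0n.
have -> : 1/2 + 1/(4 * n)%:R = (2 * k * n + k)%:R / (2 * k * (2 * n))%:R :> R.
  by rewrite !natrD !natrM; field; do ![apply/andP; split | apply: lt0r_neq0; lra].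
have -> : 1/2 + 1/(2 * n)%:R = (2 * k * n + 2 * k)%:R / (2 * k * (2 * n))%:R :> R.
  by rewrite !natrD !natrM; field; do ![apply/andP; split | apply: lt0r_neq0; lra].
by rewrite !ler_pM2r ?invr_gt0 ?ltr0n ?muln_gt0 ?k_gt0 ?n_gt0 // !ler_nat g_ge g_le.
Qed.

Lemma cvg_eps_of_le_invn (R : archiRealFieldType) (f : nat -> R) (c : R) (N0 : nat) :
  (forall n, (N0 <= n)%N -> `|f n - c| <= n%:R^-1) ->
  forall eps : R, 0 < eps -> exists N, forall n, (N <= n)%N -> `|f n - c| < eps.
Proof.
move=> f_near eps eps_gt0; exists (maxn N0 (Num.bound eps^-1).+1) => n.
rewrite geq_max => /andP[N0n bn]; apply: le_lt_trans (f_near n N0n) _.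
have epsV_lt_n : eps^-1 < n%:R.
  apply: lt_le_trans (archi_boundP _) _; first by rewrite invr_ge0 ltW.
  by rewrite ler_nat ltnW.
rewrite -(invrK eps) ltf_pV2 ?posrE ?invr_gt0 //.
by apply: le_lt_trans epsV_lt_n; rewrite invr_ge0 ltW.
Qed.

Theorem corollary6 :
  (forall k n : nat, (2 <= k)%N -> (k <= n)%N ->
     1/2 + 1/(4 * n)%:R <= qtG k n <= 1/2 + 1/(2 * n)%:R)
  /\
  (forall k : nat, (2 <= k)%N ->
     forall eps : rat, 0 < eps ->
       exists N : nat, forall n : nat, (N <= n)%N -> `|qtG k n - 1/2| < eps).
Proof.
have qtG_bounds k n : (2 <= k)%N -> (k <= n)%N ->
    1/2 + 1/(4 * n)%:R <= qtG k n <= 1/2 + 1/(2 * n)%:R.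
  move=> k_gt1 kn; have n_gt1 := leq_trans k_gt1 kn.
  rewrite /qtG /qt !gamma_t_Gm ?(ltnW k_gt1) ?(ltnW n_gt1) //.
  exact: ratio_bounds (ltnW k_gt1) (ltnW n_gt1) (gamma_t_Gm_prod k_gt1 kn).
split=> // k k_gt1; apply: (cvg_eps_of_le_invn (N0 := k)) => n kn.
have n_gt0 : (0 < n)%N := leq_trans (ltnW k_gt1) kn.
have /andP[lo hi] := qtG_bounds k n k_gt1 kn.
have lo0 : 0 <= 1/(4 * n)%:R :> rat by rewrite divr_ge0 ?ler0n.
have hi_n : 1/(2 * n)%:R <= n%:R^-1 :> rat.
  by rewrite mul1r lef_pV2 ?posrE ?ltr0n ?muln_gt0 // ler_nat leq_pmull.
rewrite ger0_norm; lra.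
Qed.
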